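(* Let $\sigma$ be any argumentation semantics whose extensions are maximal conflict-free sets (w.r.t. set inclusion). For every two argumentation frameworks $AF=(AR,Attacks)$, $AF'=(AR',Attacks')$ with $AF\preceq_N AF'$: if for all $E\in\sigma(AF)$ there is $E'\in\sigma(AF')$ with $E\subseteq E'$, then for all $E\in\sigma(AF)$ there is $E'\in\sigma(AF')$ with $E'\not\subseteq AR$ or $E'=E$.
   Context: An argumentation framework is a pair $(AR,Attacks)$ with $AR$ a finite set and $Attacks\subseteq AR\times AR$; $a$ attacks $b$ iff $(a,b)\in Attacks$. A set $S\subseteq AR$ is conflict-free iff no element of $S$ attacks an element of $S$. An argumentation semantics $\sigma$ assigns to each argumentation framework a set $\sigma(AF)$ of subsets of $AR$; ''$\sigma$'s extensions are maximal conflict-free sets'' means that for every $AF$, every $E\in\sigma(AF)$ is a $\subseteq$-maximal conflict-free subset of the argument set of $AF$. $AF\preceq_N AF'$ (normal expansion) iff $AR\subseteq AR'$, $Attacks\subseteq Attacks'$ and no $(a,b)\in Attacks'\setminus Attacks$ has both $a,b\in AR$. *)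

From mathcomp Require Import all_boot.
Set Implicit Arguments. Unset Strict Implicit. Unset Printing Implicit Defensive.

Record AF (U : finType) := MkAF { args : {set U}; attacks : {set U * U} }.

Definition wf_AF (U : finType) (F : AF U) : Prop :=
  attacks F \subset setX (args F) (args F).

Definition semantics (U : finType) := AF U -> {set {set U}}.

Definition conflict_free (U : finType) (F : AF U) (S : {set U}) : Prop :=
  S \subset args F /\ forall a b, a \in S -> b \in S -> (a, b) \notin attacks F.

Definition maximal_conflict_free (U : finType) (F : AF U) (S : {set U}) : Prop :=
  conflict_free F S /\
  forall T : {set U}, conflict_free F T -> S \subset T -> T = S.

Definition extensions_maximal_cf (U : finType) (sigma : semantics U) : Prop :=
  forall F : AF U, wf_AF F ->
    forall E, E \in sigma F -> maximal_conflict_free F E.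

Definition normal_expansion (U : finType) (F F' : AF U) : Prop :=
  args F \subset args F' /\ attacks F \subset attacks F' /\
  forall a b, (a, b) \in attacks F' -> (a, b) \notin attacks F ->
    ~ (a \in args F /\ b \in args F).

From mathcomp Require Import all_boot.
Set Implicit Arguments. Unset Strict Implicit. Unset Printing Implicit Defensive.

(* An extension E' of AF' extending E and lying inside AR is conflict-free in
   AF, because AF' only adds attacks; maximality of E in AF then forces E' = E. *)

Lemma conflict_free_sub_attacks (U : finType) (F F' : AF U) (S : {set U}) :
  attacks F \subset attacks F' -> S \subset args F ->
  conflict_free F' S -> conflict_free F S.
Proof.
move=> sub_att sSF [_ cfS']; split=> // a b Sa Sb.
by apply: contra (cfS' a b Sa Sb); apply: (subsetP sub_att).
Qed.

Theorem proposition28 (U : finType) (sigma : semantics U) (F F' : AF U) :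
  extensions_maximal_cf sigma ->
  wf_AF F -> wf_AF F' ->
  normal_expansion F F' ->
  (forall E, E \in sigma F -> exists2 E', E' \in sigma F' & E \subset E') ->
  forall E, E \in sigma F ->
    exists2 E', E' \in sigma F' & ~~ (E' \subset args F) \/ E' = E.
Proof.
move=> sigma_max wfF wfF' [_ [sub_att _]] ext_preserved E sigmaE.
have [E' sigmaE' sEE'] := ext_preserved E sigmaE.
exists E' => //.
have [sE'F | ] := boolP (E' \subset args F); [right | by left].
have [cfE' _] := sigma_max F' wfF' E' sigmaE'.
have [_ maxE] := sigma_max F wfF E sigmaE.
exact: maxE E' (conflict_free_sub_attacks sub_att sE'F cfE') sEE'.
Qed.
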